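(* Let $(V,\mathcal H,\iota,W)$ be a generalized functional theory. The ensemble functional $\mathcal F_e$ is the lower convex envelope of both the Hohenberg–Kohn functional $\mathcal F_{HK}$ and the pure functional $\mathcal F_p$; that is, with all three functionals extended to $V^*$ by $+\infty$ outside their domains, $\mathcal F_{HK}^{**}=\mathcal F_p^{**}=\mathcal F_e$.
   Context: A generalized functional theory is a tuple $(V,\mathcal H,\iota,W)$ with $V$ a finite-dimensional real vector space, $\mathcal H$ a finite-dimensional complex Hilbert space, $\iota:V\to i\mathfrak u(\mathcal H)$ linear into the Hermitian operators, $W$ Hermitian. Density operators are regarded as elements of $(i\mathfrak u(\mathcal H))^*$ via the trace pairing; $\iota^*$ is the dual map. $\mathcal P$ = pure states, $\mathcal E$ = density operators, $\mathbf G_p(v)$ = pure ground states of $\iota(v)+W$. $\mathcal F_{HK}$ is defined on $\bigcup_v\iota^*(\mathbf G_p(v))$ by $\mathcal F_{HK}(\rho)=\mathrm{Tr}(\Gamma W)$ for any $v$ and $\Gamma\in\mathbf G_p(v)$ with $\iota^*(\Gamma)=\rho$ (independent of choices); $\mathcal F_p(\rho)=\min\{\mathrm{Tr}(\Gamma W):\Gamma\in\mathcal P,\iota^*(\Gamma)=\rho\}$ on $\iota^*(\mathcal P)$; $\mathcal F_e(\rho)=\min\{\mathrm{Tr}(\Gamma W):\Gamma\in\mathcal E,\iota^*(\Gamma)=\rho\}$ on $\iota^*(\mathcal E)$. For $g:V^*\to\mathbb R\cup\{+\infty\}$, $g^*(v)=\sup_\rho(\langle\rho,v\rangle-g(\rho))$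 is the convex conjugate and $g^{**}$ the biconjugate, i.e. the lower (closed) convex envelope of $g$. *)

From mathcomp Require Import all_boot all_algebra.
From mathcomp Require Import all_classical all_reals ereal.
From mathcomp Require Import complex.
Set Implicit Arguments. Unset Strict Implicit. Unset Printing Implicit Defensive.
Import GRing.Theory Num.Theory.
Local Open Scope ring_scope.
Local Open Scope complex_scope.
Local Open Scope classical_set_scope.

(* Conventions:  V = 'rV[R]_d (coordinates of a d-dimensional real space),
   V^* = 'rV[R]_d with the pairing [pairing rho v] = sum_k rho_k v_k,
   H = C^n with C = R[i]; operators on H are 'M[R[i]]_n. *)

Section GFT.
Variable R : realType.
Variables (n d : nat).

Definition adj (p q : nat) (A : 'M[R[i]]_(p, q)) : 'M[R[i]]_(q, p) :=
  (map_mx conjc A)^T.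

Definition is_hermitian (A : 'M[R[i]]_n) : Prop := adj A = A.

Definition psd (A : 'M[R[i]]_n) : Prop :=
  is_hermitian A /\ forall x : 'cV[R[i]]_n, 0 <= (adj x *m A *m x) 0 0.

Definition density (G : 'M[R[i]]_n) : Prop := psd G /\ \tr G = 1.

Definition pure_state (G : 'M[R[i]]_n) : Prop :=
  exists x : 'cV[R[i]]_n, (adj x *m x) 0 0 = 1 /\ G = x *m adj x.

(* real part of Tr(G A) (real for Hermitian G, A) *)
Definition energy (G A : 'M[R[i]]_n) : R := complex.Re (\tr (G *m A)).

Definition pairing (rho v : 'rV[R]_d) : R := \sum_(k < d) rho 0 k * v 0 k.

(* dual map iota^* : (i u(H))^* -> V^*, defined by <iota^* G, v> = Tr(G iota(v)) *)
Definition istar (iota : 'rV[R]_d -> 'M[R[i]]_n) (G : 'M[R[i]]_n) : 'rV[R]_d :=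
  \row_(k < d) energy G (iota (delta_mx 0 k)).

Definition ground_pure (H G : 'M[R[i]]_n) : Prop :=
  pure_state G /\ forall G', pure_state G' -> energy G H <= energy G' H.

Local Open Scope ereal_scope.

(* Functionals, extended by +oo outside their domains (inf of empty set = +oo) *)
Definition F_HK (iota : 'rV[R]_d -> 'M[R[i]]_n) (W : 'M[R[i]]_n)
  (rho : 'rV[R]_d) : \bar R :=
  ereal_inf [set (energy G W)%:E | G in
    [set G | exists v, ground_pure (iota v + W) G /\ istar iota G = rho]].

Definition F_p (iota : 'rV[R]_d -> 'M[R[i]]_n) (W : 'M[R[i]]_n)
  (rho : 'rV[R]_d) : \bar R :=
  ereal_inf [set (energy G W)%:E | G in
    [set G | pure_state G /\ istar iota G = rho]].

Definition F_e (iota : 'rV[R]_d -> 'M[R[i]]_n) (W : 'M[R[i]]_n)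
  (rho : 'rV[R]_d) : \bar R :=
  ereal_inf [set (energy G W)%:E | G in
    [set G | density G /\ istar iota G = rho]].

Definition conjugate (g : 'rV[R]_d -> \bar R) (v : 'rV[R]_d) : \bar R :=
  ereal_sup [set (pairing rho v)%:E - g rho | rho in [set: 'rV[R]_d]].

Definition biconjugate (g : 'rV[R]_d -> \bar R) (rho : 'rV[R]_d) : \bar R :=
  ereal_sup [set (pairing rho v)%:E - conjugate g v | v in [set: 'rV[R]_d]].

End GFT.

From mathcomp Require Import all_boot all_algebra.
From mathcomp Require Import all_classical all_reals ereal.
From mathcomp Require Import complex sesquilinear spectral.
From mathcomp Require Import topology normedtype matrix_normedtype derive.
From mathcomp Require Import ring lra.
Set Implicit Arguments. Unset Strict Implicit. Unset Printing Implicit Defensive.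
Import order.Order.TTheory GRing.Theory Num.Theory numFieldNormedType.Exports.
Local Open Scope ring_scope.
Local Open Scope complex_scope.
Local Open Scope classical_set_scope.

(** The conjugate of each of the three functionals at v is the supremum of
    Tr(Γ(ι(v) - W)) over the corresponding states: Hohenberg–Kohn pure ground
    states, pure states, or density operators.  These suprema coincide, since
    the energy of ι(-v) + W over density operators is minimised by a pure
    ground state; so the three functionals have the same biconjugate, and it
    remains to see that F_e is its own biconjugate.  The set of pairs
    (ι^*Γ, Tr(ΓW)) over density operators Γ is convex and compact (density
    operators are the Gram matrices Y Y^* of the complex matrices Y on the unit
    sphere), and F_e is the lower boundary of this set.  If t < F_e(ρ), the
    nearest point of the set to the half-line {ρ} × (-∞, t] yields an affine
    minorant of F_e with value above t at ρ. *)

Lemma fin_leeBC (R : realType) (r : R) (x y : \bar R) :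
  (r%:E - x <= y)%E = (r%:E - y <= x)%E.
Proof.
by case: x => [x||]; case: y => [y||]; rewrite /= ?lee_fin ?leey ?leNye //;
  apply/idP/idP; lra.
Qed.

Lemma lee_of_fin_lt (R : realType) (x y : \bar R) :
  (forall r : R, (r%:E < x)%E -> (r%:E <= y)%E) -> (x <= y)%E.
Proof.
move=> xy; case: y xy => [s||] xy; last 2 first.
- exact: leey.
- case: x xy => [r||] xy; last exact: leNye.
    have r1 : r - 1 < r by lra.
    by have := xy _ r1; rewrite leeNy_eq.
  by have := xy 0 (ltry _); rewrite leeNy_eq.
case: x xy => [r||] xy; last exact: leNye.
  rewrite lee_fin leNgt; apply/negP => sr.
  have mid : (r + s) / 2 < r by lra.
  by have := xy _ mid; rewrite lee_fin; lra.
by exfalso; have := xy (s + 1) (ltry _); rewrite lee_fin; lra.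
Qed.

Lemma ge0_affine_near0 (R : realType) (a b : R) :
  (forall s, 0 < s <= 1 -> 0 <= a + s * b) -> 0 <= a.
Proof.
move=> h; rewrite leNgt; apply/negP => a0.
have nb : 0 < `|b| - a by have := normr_ge0 b; lra.
pose s := - a / (`|b| - a).
have sD : s * (`|b| - a) = - a by rewrite /s divfK // gt_eqF.
have s0 : 0 < s by rewrite /s divr_gt0 // oppr_gt0.
have s1 : s <= 1 by rewrite /s ler_pdivrMr // mul1r; have := normr_ge0 b; lra.
have := h s; rewrite s0 s1 => /(_ isT); have := ler_norm b; have := ler_normr b.
nra.
Qed.

Lemma sqr_max0_le (R : realType) (u w : R) :
  u <= w -> Num.max u 0 ^+ 2 <= w ^+ 2.
Proof.
move=> uw; have [u0|u0] := leP u 0; first by rewrite expr0n sqr_ge0.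
by rewrite ler_sqr ?nnegrE; lra.
Qed.

Lemma continuous_sum (R : realType) (T : topologicalType) (I : Type)
    (r : seq I) (F : I -> T -> R) :
  (forall i, continuous (F i)) -> continuous (fun x => \sum_(i <- r) F i x).
Proof. by move=> cF; apply: continuous_big => //; exact: add_continuous. Qed.

(** * Convex conjugates of marginal functions *)

Section Pairing.
Variables (R : realType) (d : nat).
Implicit Types (x y z : 'rV[R]_d) (c : R).

Lemma pairingC x y : pairing x y = pairing y x.
Proof. by apply: eq_bigr => k _; rewrite mulrC. Qed.

Lemma pairingDl x y z : pairing (x + y) z = pairing x z + pairing y z.
Proof.
by rewrite /pairing -big_split; apply: eq_bigr => k _; rewrite mxE mulrDl.
Qed.

Lemma pairingZl c x y : pairing (c *: x) y = c * pairing x y.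
Proof.
by rewrite /pairing mulr_sumr; apply: eq_bigr => k _; rewrite mxE mulrA.
Qed.

Lemma pairingNl x y : pairing (- x) y = - pairing x y.
Proof. by rewrite -scaleN1r pairingZl mulN1r. Qed.

Lemma pairingBl x y z : pairing (x - y) z = pairing x z - pairing y z.
Proof. by rewrite pairingDl pairingNl. Qed.

Lemma pairingZr c x y : pairing x (c *: y) = c * pairing x y.
Proof. by rewrite pairingC pairingZl pairingC. Qed.

Lemma pairingNr x y : pairing x (- y) = - pairing x y.
Proof. by rewrite pairingC pairingNl pairingC. Qed.

Lemma pairing_ge0 x : 0 <= pairing x x.
Proof. by apply: sumr_ge0 => k _; rewrite -expr2 sqr_ge0. Qed.

Lemma pairing_eq0 x : (pairing x x == 0) = (x == 0).
Proof.
apply/eqP/eqP => [x0|->]; last by apply: big1 => k _; rewrite mxE mul0r.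
apply/rowP => k; apply/eqP; rewrite mxE -sqrf_eq0 expr2.
have /psumr_eq0P : forall k, true -> 0 <= x 0 k * x 0 k.
  by move=> i _; rewrite -expr2 sqr_ge0.
by move=> /(_ x0 k isT) ->.
Qed.

Lemma pairing_expand x y c :
  pairing (x + c *: y) (x + c *: y) =
  pairing x x + 2 * c * pairing x y + c ^+ 2 * pairing y y.
Proof.
rewrite pairingDl !pairingZl !(pairingC _ (x + _)) !pairingDl !pairingZl.
rewrite (pairingC y x); lra.
Qed.

End Pairing.

Section Conjugation.
Variables (R : realType) (d : nat).
Local Open Scope ereal_scope.

Lemma biconjugate_le (g : 'rV[R]_d -> \bar R) rho : biconjugate g rho <= g rho.
Proof.
apply: ge_ereal_sup => _ [v _ <-]; rewrite fin_leeBC.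
by apply: ereal_sup_ubound; exists rho.
Qed.

Variables (T : Type) (f : T -> 'rV[R]_d) (e : T -> R).

Definition marginal (A : set T) (rho : 'rV[R]_d) : \bar R :=
  ereal_inf [set (e x)%:E | x in [set x | A x /\ f x = rho]].

Definition support_function (A : set T) (v : 'rV[R]_d) : \bar R :=
  ereal_sup [set (pairing (f x) v - e x)%:E | x in A].

Lemma conjugate_marginal A : conjugate (marginal A) = support_function A.
Proof.
apply/funext => v; apply/eqP; rewrite eq_le; apply/andP; split.
  apply: ge_ereal_sup => _ [rho _ <-]; rewrite fin_leeBC.
  apply: le_ereal_inf_tmp => _ [x [Ax <-] <-]; rewrite fin_leeBC.
  by apply: ereal_sup_ubound; exists x.
apply: ge_ereal_sup => _ [x Ax <-].
apply: le_ereal_sup_tmp; exists ((pairing (f x) v)%:E - marginal A (f x)).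
  by exists (f x).
by rewrite EFinB leeB // ereal_inf_lbound //; exists x.
Qed.

Lemma support_function_le (A B : set T) v :
  (forall x, A x -> exists2 y, B y &
     pairing (f x) v - e x <= pairing (f y) v - e y)%R ->
  support_function A v <= support_function B v.
Proof.
move=> AB; apply: ge_ereal_sup => _ [x /AB [y By le_xy] <-].
by apply: le_ereal_sup_tmp; exists (pairing (f y) v - e y)%:E; [exists y|].
Qed.

End Conjugation.

Lemma marginal_image (R : realType) (d : nat) (S T : Type) (f : T -> 'rV[R]_d)
    (e : T -> R) (g : S -> T) (A : set S) :
  marginal f e (g @` A) = marginal (f \o g) (e \o g) A.
Proof.
apply/funext => rho; congr ereal_inf; apply/seteqP; split.
  by move=> _ [_ [[x Ax <-] <-] <-]; exists x.
by move=> _ [x [Ax <-] <-]; exists (g x) => //; split => //; exists x.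
Qed.

Section FenchelMoreau.
Variables (R : realType) (d : nat) (T : topologicalType).
Variables (K : set T) (f : T -> 'rV[R]_d) (e : T -> R).
Hypothesis K_compact : compact K.
Hypothesis f_cont : forall k, continuous (fun x => f x 0 k).
Hypothesis e_cont : continuous e.
Hypothesis K_mix : forall x y, K x -> K y -> forall s, 0 <= s <= 1 ->
  exists2 z, K z & f z = (1 - s) *: f x + s *: f y /\
                   e z = (1 - s) * e x + s * e y.

Lemma compact_argmin (h : T -> R) : continuous h -> K !=set0 ->
  exists2 x0, K x0 & forall x, K x -> h x0 <= h x.
Proof.
move=> hc K0.
have [x0] := compact_EVT_min K0 K_compact (continuous_subspaceT hc).
by rewrite inE => Kx0 x0min; exists x0 => // x Kx; apply: x0min; rewrite inE.
Qed.

Section Separation.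
Variables (rho : 'rV[R]_d) (t : R).

(* The squared distance from (f x, e x) to the half-line {rho} x (-oo, t]. *)
Definition sqdist (x : T) : R :=
  pairing (f x - rho) (f x - rho) + Num.max (e x - t) 0 ^+ 2.

Lemma continuous_sqdist : continuous sqdist.
Proof.
have cf k : continuous (fun x => f x 0 k - rho 0 k).
  by move=> x; apply: continuousB; [exact: f_cont | exact: cst_continuous].
have cm : continuous (fun x => Num.max (e x - t) 0).
  move=> x; apply: (@continuous_max _ _ (fun x => e x - t) (fun=> 0));
    last exact: cst_continuous.
  by apply: continuousB; [exact: e_cont | exact: cst_continuous].
have -> : sqdist = fun x => \sum_k (f x 0 k - rho 0 k) * (f x 0 k - rho 0 k)
                           + Num.max (e x - t) 0 * Num.max (e x - t) 0.
  by apply/funext => x; rewrite /sqdist expr2; congr (_ + _);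
    apply: eq_bigr => k _; rewrite !mxE.
move=> x; apply: cvgD; last by apply: cvgM; exact: cm.
by apply: continuous_sum => k y; apply: cvgM; exact: cf.
Qed.

(* First-order optimality of a nearest point: sqdist cannot decrease along the
   segment from x0 towards any x, which K_mix realises inside K. *)
Lemma sqdist_argmin_ineq x0 :
  K x0 -> (forall x, K x -> sqdist x0 <= sqdist x) -> forall x, K x ->
  pairing (f x0 - rho) (f x0 - rho)
    + Num.max (e x0 - t) 0 * (t + Num.max (e x0 - t) 0)
  <= pairing (f x0 - rho) (f x - rho) + Num.max (e x0 - t) 0 * e x.
Proof.
move=> Kx0 x0min x Kx; set a := f x0 - rho; set b := Num.max _ 0.
set D := f x - f x0; set X := e x - (t + b).
have eb : e x0 - t <= b by rewrite le_max lexx.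
suff : 0 <= 2 * (pairing a D + b * X).
  have -> : f x - rho = a + D by apply/rowP => k; rewrite !mxE; lra.
  by rewrite [pairing a (a + D)]pairingC pairingDl (pairingC D) /X; lra.
apply: (@ge0_affine_near0 _ _ (pairing D D + X ^+ 2)) => s /andP[s0 s1].
have [z Kz [fz ez]] := K_mix Kx0 Kx (s := s) ltac:(by rewrite (ltW s0) s1).
have fza : f z - rho = a + s *: D.
  rewrite fz /a /D scalerBr scalerBl scale1r.
  by apply/rowP => k; rewrite !mxE; lra.
have ezb : e z - t <= b + s * X by rewrite ez /X; nra.
have := x0min z Kz; rewrite /sqdist fza pairing_expand -/a -/b.
have := sqr_max0_le ezb.
move: (pairing a a) (pairing a D) (pairing D D) => Paa PaD PDD h1 h2.
suff : 0 <= s * (2 * (PaD + b * X) + s * (PDD + X ^+ 2)) by rewrite pmulr_rge0.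
nra.
Qed.

Lemma separation : (forall x, K x -> f x = rho -> t < e x) ->
  exists v c, t < c /\ forall x, K x -> c <= pairing (rho - f x) v + e x.
Proof.
move=> rho_t; have [K0|K0] := pselect (K !=set0); last first.
  exists 0, (t + 1); split => [|x Kx]; first lra.
  by exfalso; apply: K0; exists x.
have [x0 Kx0 x0min] := compact_argmin continuous_sqdist K0.
have [xw Kxw xwmin] := compact_argmin e_cont K0.
have := sqdist_argmin_ineq Kx0 x0min.
set a := f x0 - rho; set b := Num.max _ 0 => key.
have pairing_rho x : pairing (rho - f x) (- a) = pairing a (f x - rho).
  by rewrite pairingNr -pairingNl opprB pairingC.
have [b_gt0|b_le0] := ltP 0 b.
  exists (b^-1 *: - a), (t + b); split => [|x Kx]; first lra.
  rewrite pairingZr pairing_rho.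
  rewrite -(ler_pM2l b_gt0) [X in _ <= X]mulrDr mulrA mulfV ?gt_eqF // mul1r.
  by have := key x Kx; have := pairing_ge0 a; lra.
(* The nearest point lies below t, so it is off the vertical line through rho
   and a steep multiple of -a separates, e being bounded below on K. *)
have b0 : b = 0 by apply/le_anti; rewrite b_le0 le_max lexx orbT.
have a_gt0 : 0 < pairing a a.
  rewrite lt_def pairing_ge0 andbT pairing_eq0 /a subr_eq0; apply/eqP => fx0.
  have := rho_t x0 Kx0 fx0; have : e x0 - t <= b by rewrite le_max lexx.
  lra.
pose l := (`|t - e xw| + 1) / pairing a a.
exists (l *: - a), (t + 1); split => [|x Kx]; first lra.
rewrite pairingZr pairing_rho.
have la : l * pairing a a = `|t - e xw| + 1 by rewrite /l divfK ?gt_eqF.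
have l0 : 0 <= l by rewrite /l divr_ge0 ?ltW.
have := key x Kx; rewrite b0 !mul0r !addr0 => /(ler_wpM2l l0).
have := xwmin x Kx; have := ler_norm (t - e xw); lra.
Qed.

End Separation.

Theorem biconjugate_marginal : biconjugate (marginal f e K) = marginal f e K.
Proof.
apply/funext => rho; apply/eqP; rewrite eq_le biconjugate_le /=.
apply: lee_of_fin_lt => t t_lt.
have [|v [c [tc sep]]] := @separation rho t.
  move=> x Kx fx; rewrite -lte_fin; apply: (lt_le_trans t_lt).
  by apply: ereal_inf_lbound; exists x.
apply: le_ereal_sup_tmp.
exists ((pairing rho v)%:E - support_function f e K v)%E.
  by exists v => //; rewrite conjugate_marginal.
have supp_le : (support_function f e K v <= (pairing rho v - c)%:E)%E.
  apply: ge_ereal_sup => _ [x Kx <-]; rewrite lee_fin.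
  by have := sep x Kx; rewrite pairingBl; lra.
apply: (@le_trans _ _ c%:E); first by rewrite lee_fin ltW.
rewrite {1}(_ : c = pairing rho v - (pairing rho v - c)); last by ring.
by rewrite EFinB leeB.
Qed.

End FenchelMoreau.

(** * Hermitian matrices and states *)

Section Adjoint.
Variable R : realType.
Local Notation C := R[i].

Lemma adjM p q r (A : 'M[C]_(p, q)) (B : 'M[C]_(q, r)) :
  adj (A *m B) = adj B *m adj A.
Proof. by rewrite /adj map_mxM trmx_mul. Qed.

Lemma adjK p q (A : 'M[C]_(p, q)) : adj (adj A) = A.
Proof. by apply/matrixP => i j; rewrite !mxE conjcK. Qed.

Lemma adjD p q (A B : 'M[C]_(p, q)) : adj (A + B) = adj A + adj B.
Proof. by rewrite /adj map_mxD linearD. Qed.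

Lemma adjZR p q (r : R) (A : 'M[C]_(p, q)) : adj (r%:C *: A) = r%:C *: adj A.
Proof.
apply/matrixP => i j; rewrite !mxE rmorphM; congr (_ * _); exact: conjc_real.
Qed.

Lemma adj_trmxC n (A : 'M[C]_n) : adj A = (A ^t* )%sesqui.
Proof. by apply/matrixP => i j; rewrite !mxE. Qed.

End Adjoint.

Section Energy.
Variables (R : realType) (n : nat).
Local Notation C := R[i].
Local Notation M := 'M[C]_n.
Local Notation Re := complex.Re.
Implicit Types (G A B : M) (r : R).

Lemma energyDl G1 G2 A : energy (G1 + G2) A = energy G1 A + energy G2 A.
Proof. by rewrite /energy mulmxDl !raddfD. Qed.

Lemma energyDr G A B : energy G (A + B) = energy G A + energy G B.
Proof. by rewrite /energy mulmxDr !raddfD. Qed.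

Lemma energyNr G A : energy G (- A) = - energy G A.
Proof. by rewrite /energy mulmxN !raddfN. Qed.

Lemma energyZl r G A : energy (r%:C *: G) A = r * energy G A.
Proof.
by rewrite /energy -scalemxAl linearZ /=; case: (\tr _) => a b /=;
  rewrite mul0r subr0.
Qed.

Lemma energyZr r G A : energy G (r%:C *: A) = r * energy G A.
Proof.
by rewrite /energy -scalemxAr linearZ /=; case: (\tr _) => a b /=;
  rewrite mul0r subr0.
Qed.

Lemma energy_suml I (s : seq I) (F : I -> M) A :
  energy (\sum_(i <- s) F i) A = \sum_(i <- s) energy (F i) A.
Proof. by rewrite /energy mulmx_suml [\tr _]raddf_sum raddf_sum. Qed.

Lemma energy_sumr I (s : seq I) G (F : I -> M) :
  energy G (\sum_(i <- s) F i) = \sum_(i <- s) energy G (F i).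
Proof. by rewrite /energy mulmx_sumr [\tr _]raddf_sum raddf_sum. Qed.

Lemma energy_rank1 (y : 'cV[C]_n) A :
  energy (y *m adj y) A = Re ((adj y *m A *m y) 0 0).
Proof. by rewrite /energy -mulmxA mxtrace_mulC trace_mx11. Qed.

End Energy.

Section States.
Variables (R : realType) (n : nat).
Local Notation C := R[i].
Local Notation M := 'M[C]_n.
Local Notation Im := complex.Im.
Implicit Types (G A B : M).

Lemma psdD A B : psd A -> psd B -> psd (A + B).
Proof.
move=> [hA pA] [hB pB]; split; first by rewrite /is_hermitian adjD hA hB.
by move=> x; rewrite mulmxDr mulmxDl mxE addr_ge0.
Qed.

Lemma psdZ (r : R) A : 0 <= r -> psd A -> psd (r%:C *: A).
Proof.
move=> r0 [hA pA]; split; first by rewrite /is_hermitian adjZR hA.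
by move=> x; rewrite -scalemxAr -scalemxAl mxE mulr_ge0 // ler0c.
Qed.

Lemma adj_mul_self_ge0 m (z : 'cV[C]_m) : 0 <= (adj z *m z) 0 0.
Proof. by rewrite mxE sumr_ge0 // => i _; rewrite !mxE mulrC mulcJ_ge0. Qed.

Lemma psd_gram m (Y : 'M[C]_(n, m)) : psd (Y *m adj Y).
Proof.
split; first by rewrite /is_hermitian adjM adjK.
move=> x.
have -> : adj x *m (Y *m adj Y) *m x = adj (adj Y *m x) *m (adj Y *m x).
  by rewrite adjM adjK !mulmxA.
exact: adj_mul_self_ge0.
Qed.

Lemma psd_diag_ge0 G i : psd G -> 0 <= G i i.
Proof.
move=> [_ /(_ (delta_mx i 0))].
have -> : adj (delta_mx i 0 : 'cV[C]_n) = delta_mx 0 i.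
  by apply/matrixP => j k; rewrite !mxE conjc_nat andbC.
by rewrite -rowE -colE !mxE.
Qed.

Lemma psd_trace G : psd G -> \tr G = (energy G 1%:M)%:C.
Proof.
move=> pG; have Im0 : Im (\tr G) = 0.
  by rewrite raddf_sum big1 // => i _; apply/ger0_Im/psd_diag_ge0.
by rewrite /energy mulmx1; case: (\tr G) Im0 => a b /= ->.
Qed.

Lemma densityE G : density G <-> psd G /\ energy G 1%:M = 1.
Proof.
split=> [[pG tG] | [pG eG]]; split => //; last by rewrite psd_trace // eG.
by move: tG; rewrite psd_trace // => -[].
Qed.

Lemma pure_density G : pure_state G -> density G.
Proof.
move=> [x [x1 ->]]; apply/densityE; split; first exact: psd_gram.
by rewrite energy_rank1 mulmx1 x1.
Qed.

Lemma density_mix A B (s : R) : density A -> density B -> 0 <= s <= 1 ->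
  density ((1 - s)%:C *: A + s%:C *: B).
Proof.
move=> /densityE[pA eA] /densityE[pB eB] /andP[s0 s1]; apply/densityE; split.
  by apply: psdD; apply: psdZ => //; rewrite subr_ge0.
by rewrite energyDl !energyZl eA eB; ring.
Qed.

Lemma density_dim_gt0 G : density G -> (0 < n)%N.
Proof.
case: n G => // G [_]; rewrite /mxtrace big_ord0 => /eqP.
by rewrite eq_sym oner_eq0.
Qed.

End States.

Section Spectral.
Variables (R : realType) (n : nat).
Local Notation C := R[i].
Local Notation M := 'M[C]_n.
Local Notation Re := complex.Re.
Local Notation Im := complex.Im.
Implicit Types (G H A P : M).

Lemma hermitian_spectral A : is_hermitian A ->
  exists P (D : 'rV[C]_n),
    [/\ P *m adj P = 1%:M, adj P *m P = 1%:M & A = adj P *m diag_mx D *m P].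
Proof.
move=> hA; have /orthomx_spectralP eA : A \is normalmx.
  by apply/normalmxP; rewrite -adj_trmxC hA.
have uP := spectral_unitarymx A.
exists (spectralmx A), (spectral_diag A); rewrite !adj_trmxC; split.
- exact/unitarymxP.
- by rewrite -[X in X *m _ = _]mul1mx mulmxKtV.
- by rewrite -invmx_unitary.
Qed.

Lemma row_mul_adj_row m (X Y : 'M[C]_(n, m)) i j :
  (row i X *m adj (row j Y)) 0 0 = (X *m adj Y) i j.
Proof. by rewrite !mxE; apply: eq_bigr => k _; rewrite !mxE. Qed.

Lemma energy_rank1_diag P (D : 'rV[C]_n) (y : 'cV[C]_n) :
  energy (y *m adj y) (adj P *m diag_mx D *m P) =
  \sum_k Re (D 0 k) * (Re ((P *m y) k 0) ^+ 2 + Im ((P *m y) k 0) ^+ 2).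
Proof.
rewrite energy_rank1 (_ : _ *m y = adj (P *m y) *m diag_mx D *m (P *m y)).
  move: (P *m y) => z; rewrite mul_mx_diag mxE raddf_sum; apply: eq_bigr => k _.
  by rewrite !mxE; case: (D 0 k) => a b; case: (z k 0) => c e /=; ring.
by rewrite adjM !mulmxA.
Qed.

Lemma hermitian_rayleigh H : is_hermitian H -> (0 < n)%N ->
  exists2 u : 'cV[C]_n, (adj u *m u) 0 0 = 1 &
    forall y : 'cV[C]_n, energy (u *m adj u) H * energy (y *m adj y) 1%:M
              <= energy (y *m adj y) H.
Proof.
move=> hH n0; have [P [D [PP1 P1P eH]]] := hermitian_spectral hH.
have [k0 _ k0min] :=
  @arg_minP _ R _ (Ordinal n0) xpredT (fun k => Re (D 0 k)) isT.
have quad_row A k : (adj (adj (row k P)) *m A *m adj (row k P)) 0 0 =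
                    (P *m A *m adj P) k k.
  by rewrite adjK -row_mul row_mul_adj_row.
exists (adj (row k0 P)); first by rewrite adjK row_mul_adj_row PP1 mxE eqxx.
have one : 1%:M = adj P *m diag_mx (const_mx 1) *m P.
  by rewrite diag_const_mx mulmx1 P1P.
have -> : energy (adj (row k0 P) *m adj (adj (row k0 P))) H = Re (D 0 k0).
  rewrite energy_rank1 quad_row eH !mulmxA PP1 mul1mx -mulmxA PP1 mulmx1.
  by rewrite mxE eqxx.
move=> y; rewrite [in X in _ * X]one eH !energy_rank1_diag mulr_sumr.
apply: ler_sum => k _; rewrite mxE mul1r ler_wpM2r ?k0min //.
by rewrite addr_ge0 ?sqr_ge0.
Qed.

Lemma psd_gram_decomp G : psd G -> exists Y : M, G = Y *m adj Y.
Proof.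
move=> pG; have [P [D [PP1 P1P eG]]] := hermitian_spectral pG.1.
have D0 k : 0 <= D 0 k.
  have := pG.2 (adj (row k P)); rewrite adjK -row_mul row_mul_adj_row eG.
  by rewrite !mulmxA PP1 mul1mx -mulmxA PP1 mulmx1 mxE eqxx.
pose s := \row_k (Num.sqrt (Re (D 0 k)))%:C.
have adj_s : adj (diag_mx s) = diag_mx s.
  apply/matrixP => i j; rewrite !mxE eq_sym rmorphMn.
  by have [->|] := eqVneq i j; rewrite ?mulr0n // !mulr1n; exact: conjc_real.
exists (adj P *m diag_mx s); rewrite adjM adjK adj_s mulmxA -(mulmxA (adj P)).
rewrite mulmx_diag eG; congr (_ *m diag_mx _ *m _).
apply/rowP => k; rewrite !mxE.
have := D0 k; rewrite lecE /= => /andP[/eqP Im0 Re0].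
rewrite -rmorphM -expr2 sqr_sqrtr //.
by case: (D 0 k) Im0 => a b /= ->.
Qed.

Lemma energy_gram m (Y : 'M[C]_(n, m)) A :
  energy (Y *m adj Y) A = \sum_k energy (col k Y *m adj (col k Y)) A.
Proof.
rewrite -energy_suml; congr energy; apply/matrixP => i j.
by rewrite summxE !mxE; apply: eq_bigr => k _; rewrite !mxE big_ord1 !mxE.
Qed.

Lemma ground_pure_exists H : (0 < n)%N -> is_hermitian H ->
  exists G, ground_pure H G.
Proof.
move=> n0 hH; have [u u1 umin] := hermitian_rayleigh hH n0.
exists (u *m adj u); split; first by exists u.
move=> _ [x [x1 ->]]; have := umin x.
by rewrite [energy _ 1%:M]energy_rank1 mulmx1 x1 mulr1.
Qed.

Lemma ground_pure_le_density H G0 G : is_hermitian H ->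
  ground_pure H G0 -> density G -> energy G0 H <= energy G H.
Proof.
move=> hH [_ G0min] dG.
have [u u1 umin] := hermitian_rayleigh hH (density_dim_gt0 dG).
have [Y eY] := psd_gram_decomp dG.1.
have [_ eG1] := (densityE G).1 dG.
apply: (le_trans (G0min (u *m adj u) _)); first by exists u.
rewrite -[energy (u *m _) H]mulr1 -eG1 eY !(energy_gram Y) mulr_sumr.
by apply: ler_sum => k _; exact: umin.
Qed.

End Spectral.

(** * Real coordinates on density operators *)

Section Parameterization.
Variables (R : realType) (n : nat).
Local Notation C := R[i].
Local Notation M := 'M[C]_n.
Local Notation Re := complex.Re.
Local Notation Im := complex.Im.
Local Notation N := (n * (n + n))%N.

Lemma Re_adj_mul_self m (z : 'cV[C]_m) :
  Re ((adj z *m z) 0 0) = \sum_i (Re (z i 0) ^+ 2 + Im (z i 0) ^+ 2).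
Proof.
rewrite mxE raddf_sum; apply: eq_bigr => i _; rewrite !mxE.
by case: (z i 0) => a b /=; ring.
Qed.

Lemma Re_quad m (y : 'cV[C]_m) (A : 'M[C]_m) :
  Re ((adj y *m A *m y) 0 0) =
  \sum_j \sum_i
    (Re (A i j) * (Re (y i 0) * Re (y j 0) + Im (y i 0) * Im (y j 0))
     - Im (A i j) * (Re (y i 0) * Im (y j 0) - Im (y i 0) * Re (y j 0))).
Proof.
rewrite mxE raddf_sum; apply: eq_bigr => j _; rewrite mxE big_distrl raddf_sum.
apply: eq_bigr => i _; rewrite !mxE.
by case: (A i j) => a b; case: (y i 0) => c e; case: (y j 0) => f g /=; ring.
Qed.

Lemma continuous_Re_quad (T : topologicalType) m (y : T -> 'cV[C]_m) A :
  (forall i, continuous (fun x => Re (y x i 0))) ->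
  (forall i, continuous (fun x => Im (y x i 0))) ->
  continuous (fun x => Re ((adj (y x) *m A *m y x) 0 0)).
Proof.
move=> cRe cIm; under eq_fun do rewrite Re_quad.
apply: continuous_sum => j; apply: continuous_sum => i x.
by repeat (apply: cvgB || apply: cvgD || apply: cvgM || apply: cvg_cst
           || apply: cRe || apply: cIm).
Qed.

(* t lists the real and imaginary parts of the entries of an n x n complex
   matrix; unit_trace is the unit sphere of these coordinates. *)
Definition cmx (t : 'rV[R]_N) : M :=
  \matrix_(i, k) (vec_mx t i (lshift n k) +i* vec_mx t i (rshift n k)).

Definition gram (t : 'rV[R]_N) : M := cmx t *m adj (cmx t).

Definition unit_trace : set 'rV[R]_N := [set t | energy (gram t) 1%:M = 1].

Lemma cmx_surj (Y : M) : exists t, cmx t = Y.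
Proof.
exists (mxvec (row_mx (map_mx (@complex.Re R) Y) (map_mx (@complex.Im R) Y))).
apply/matrixP => i k; rewrite mxE mxvecK row_mxEl row_mxEr !mxE.
by case: (Y i k).
Qed.

Lemma density_gram : @density R n = gram @` unit_trace.
Proof.
apply/seteqP; split => [G dG | _ [t ut <-]]; last first.
  by apply/densityE; split; [exact: psd_gram | exact: ut].
have [Y eY] := psd_gram_decomp dG.1; have [t eYt] := cmx_surj Y.
exists t; last by rewrite /gram eYt.
by rewrite /unit_trace /= /gram eYt -eY; case: ((densityE G).1 dG).
Qed.

Lemma continuous_energy_gram A : continuous (fun t => energy (gram t) A).
Proof.
under eq_fun do rewrite /gram energy_gram.
apply: continuous_sum => k; under eq_fun do rewrite energy_rank1.
by apply: continuous_Re_quad => i; under eq_fun do rewrite !mxE;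
  exact: coord_continuous.
Qed.

Lemma energy_gram1 t :
  energy (gram t) 1%:M =
  \sum_k \sum_i (Re (cmx t i k) ^+ 2 + Im (cmx t i k) ^+ 2).
Proof.
rewrite /gram energy_gram; apply: eq_bigr => k _.
rewrite energy_rank1 mulmx1 Re_adj_mul_self.
by apply: eq_bigr => i _; rewrite !mxE.
Qed.

Lemma unit_trace_coord_le1 t j : unit_trace t -> `|t 0 j| <= 1.
Proof.
rewrite /unit_trace /= energy_gram1 => t1.
case/mxvec_indexP: j => i c; rewrite -[t]vec_mxK mxvecE.
have sq_le1 k : Re (cmx t i k) ^+ 2 + Im (cmx t i k) ^+ 2 <= 1.
  rewrite -t1 (bigD1 k) //= (bigD1 i) //= -addrA lerDl addr_ge0 //.
    by rewrite sumr_ge0 // => ? _; rewrite addr_ge0 ?sqr_ge0.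
  by rewrite sumr_ge0 // => ? _; rewrite sumr_ge0 // => ? _;
    rewrite addr_ge0 ?sqr_ge0.
rewrite ler_norml; case: (split_ordP c) => k ->; have := sq_le1 k;
  rewrite [cmx t i k]mxE /=; move: (vec_mx t i _) (vec_mx t i _) => a b ab1;
  apply/andP; split; nra.
Qed.

Lemma unit_trace_compact : compact unit_trace.
Proof.
apply: bounded_closed_compact.
  exists 1; split; first exact: num_real.
  move=> r r1 t ut; change (mx_norm t <= r); rewrite mx_normrE.
  apply: bigmax_le => [|[a j] _ /=]; first by rewrite (le_trans _ (ltW r1)).
  by rewrite (ord1 a) (le_trans (unit_trace_coord_le1 j ut)) // ltW.
exact: (continuous_closedP _).1 (continuous_energy_gram (A := 1%:M)) _
  (closed_eq (y := 1)).
Qed.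

End Parameterization.

Arguments unit_trace {R n}.

(** * The three functionals *)

Section Functionals.
Variables (R : realType) (n d : nat).
Local Notation C := R[i].
Local Notation M := 'M[C]_n.
Variables (iota : 'rV[R]_d -> M) (W : M).
Hypothesis iota_lin : forall (a : R) (u v : 'rV[R]_d),
  iota (a *: u + v) = a%:C *: iota u + iota v.
Hypothesis iota_herm : forall v, is_hermitian (iota v).
Hypothesis W_herm : is_hermitian W.

Lemma iotaD u v : iota (u + v) = iota u + iota v.
Proof. by rewrite -[u]scale1r iota_lin scale1r rmorph1 scale1r. Qed.

Lemma iota0 : iota 0 = 0.
Proof. by apply: (addrI (iota 0)); rewrite addr0 -iotaD addr0. Qed.

Lemma iotaZ a u : iota (a *: u) = a%:C *: iota u.
Proof. by rewrite -[a *: u]addr0 iota_lin iota0 addr0. Qed.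

Lemma iotaN u : iota (- u) = - iota u.
Proof. by rewrite -scaleN1r iotaZ rmorphN1 scaleN1r. Qed.

Lemma pairing_istar G v : pairing (istar iota G) v = energy G (iota v).
Proof.
rewrite {2}(row_sum_delta v) (big_morph _ iotaD iota0) energy_sumr.
by apply: eq_bigr => k _; rewrite iotaZ energyZr mxE mulrC.
Qed.

Lemma pairing_istar_subr G v :
  pairing (istar iota G) v - energy G W = - energy G (iota (- v) + W).
Proof. by rewrite pairing_istar energyDr iotaN energyNr opprD opprK. Qed.

Definition HK_state : set M := [set G | exists v, ground_pure (iota v + W) G].

Local Notation marginal_W := (marginal (istar iota) (fun G => energy G W)).
Local Notation support_W :=
  (support_function (istar iota) (fun G => energy G W)).

Lemma F_HK_marginal : F_HK iota W = marginal_W HK_state.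
Proof.
apply/funext => rho; congr ereal_inf; congr image; apply/seteqP.
split=> G; first by move=> [v [gv <-]]; split => //; exists v.
by move=> [[v gv] <-]; exists v.
Qed.

Lemma support_density_le_HK v :
  (support_W (@density R n) v <= support_W HK_state v)%E.
Proof.
apply: support_function_le => G dG.
have hH : is_hermitian (iota (- v) + W).
  by rewrite /is_hermitian adjD iota_herm W_herm.
have [G0 gG0] := ground_pure_exists (density_dim_gt0 dG) hH.
exists G0; first by exists (- v).
by rewrite /= !pairing_istar_subr lerN2 ground_pure_le_density.
Qed.

Lemma support_HK_le_pure v :
  (support_W HK_state v <= support_W (@pure_state R n) v)%E.
Proof. by apply: support_function_le => G [u [pG _]]; exists G. Qed.

Lemma support_pure_le_density v :
  (support_W (@pure_state R n) v <= support_W (@density R n) v)%E.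
Proof. by apply: support_function_le => G /pure_density dG; exists G. Qed.

Lemma conjugate_F_HK : conjugate (F_HK iota W) = conjugate (F_e iota W).
Proof.
rewrite F_HK_marginal !conjugate_marginal; apply/funext => v; apply/le_anti.
by rewrite support_density_le_HK (le_trans (support_HK_le_pure v))
  ?support_pure_le_density.
Qed.

Lemma conjugate_F_p : conjugate (F_p iota W) = conjugate (F_e iota W).
Proof.
rewrite !conjugate_marginal; apply/funext => v; apply/le_anti.
by rewrite support_pure_le_density (le_trans (support_density_le_HK v))
  ?support_HK_le_pure.
Qed.

Lemma biconjugate_F_e : biconjugate (F_e iota W) = F_e iota W.
Proof.
rewrite [F_e iota W](_ : _ = marginal_W (@density R n)) // density_gram.
rewrite marginal_image; apply: biconjugate_marginal.
- exact: unit_trace_compact.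
- by move=> k; under eq_fun do rewrite /= mxE; exact: continuous_energy_gram.
- exact: continuous_energy_gram.
move=> x y ux uy s s01.
have dgram (t : 'rV[R]_(n * (n + n))) : unit_trace t -> density (gram t).
  by move=> ut; rewrite density_gram; exists t.
have := density_mix (dgram x ux) (dgram y uy) s01; rewrite density_gram.
move=> [z uz ez]; exists z => //=; rewrite ez; split.
  by apply/rowP => k; rewrite !mxE energyDl !energyZl.
by rewrite energyDl !energyZl.
Qed.

End Functionals.

Theorem proposition2p34 (R : realType) (n d : nat)
  (iota : 'rV[R]_d -> 'M[R[i]]_n) (W : 'M[R[i]]_n)
  (iota_lin : forall (a : R) (u v : 'rV[R]_d),
      iota (a *: u + v) = (a%:C) *: iota u + iota v)
  (iota_herm : forall v, is_hermitian (iota v))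
  (W_herm : is_hermitian W) :
  biconjugate (F_HK iota W) = F_e iota W /\
  biconjugate (F_p iota W) = F_e iota W.
Proof.
rewrite -(biconjugate_F_e iota W) /biconjugate.
by rewrite (conjugate_F_HK iota_lin iota_herm W_herm)
  (conjugate_F_p iota_lin iota_herm W_herm).
Qed.
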